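(* Let $X$ be a real Banach space, let $x\in S_X$ and $x^*\in S_{X^*}$ with $x^*(x)=1$. Let $(x_n^* )_{n\in\mathbb N}\subset B_{X^*}$ be a sequence such that $x^*$ is a $w^*$-cluster point of $(x_n^* )$ (every $w^*$-neighbourhood of $x^*$ contains $x_n^*$ for infinitely many $n$). Assume there is a sequence $(U_n)_{n\in\mathbb N}$ of relatively $w^*$-open subsets of $J(x)$ such that \[\bigcup_n U_n=\bigcup_n \overline{U_n}^{w^*}=J(x)\setminus\{x^*\}.\] Then there is a subsequence $(n_k)$ such that $x_{n_k}^*\to x^*$ in the $w^*$-topology as $k\to\infty$.
   Context: $B_X$, $S_X$ denote the closed unit ball and unit sphere; $J(x)=\{y^*\in S_{X^*}: y^*(x)=1\}$ for $x\in S_X$. *)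

From HB Require Import structures.
From mathcomp Require Import all_boot all_order all_algebra.
From mathcomp Require Import all_classical all_reals all_analysis.
Set Implicit Arguments. Unset Strict Implicit. Unset Printing Implicit Defensive.
Import Order.TTheory GRing.Theory Num.Theory.
Import numFieldNormedType.Exports.
Local Open Scope classical_set_scope.
Local Open Scope ring_scope.

(* The weak-star topology
   on X^* is the topology of pointwise convergence, i.e. the subspace topology
   induced by {ptws X -> R} (the product topology on R^X). *)
Definition dual (R : realType) (X : normedModType R) : set {ptws X -> R^o} :=
  [set f | (forall (a : R) (u v : X), f (a *: u + v) = a * f u + f v)
           /\ continuous (f : X -> R^o)].

Definition dualnorm (R : realType) (X : normedModType R) (f : X -> R) : R :=
  sup [set `|f u| | u in [set u : X | `|u| <= 1]].

Definition dual_ball (R : realType) (X : normedModType R) : set {ptws X -> R^o} :=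
  [set f | @dual R X f /\ dualnorm f <= 1].
Definition dual_sphere (R : realType) (X : normedModType R) : set {ptws X -> R^o} :=
  [set f | @dual R X f /\ dualnorm f = 1].

Definition Jset (R : realType) (X : normedModType R) (x : X) : set {ptws X -> R^o} :=
  [set f | @dual_sphere R X f /\ f x = 1].

Definition rel_wstar_open (R : realType) (X : normedModType R)
    (A U : set {ptws X -> R^o}) : Prop :=
  exists V : set {ptws X -> R^o}, open V /\ U = V `&` A.

From HB Require Import structures.
From mathcomp Require Import all_boot all_order all_algebra.
From mathcomp Require Import all_classical all_reals all_analysis.
Import Order.TTheory GRing.Theory Num.Theory.
Import numFieldNormedType.Exports.
Local Open Scope classical_set_scope.
Local Open Scope ring_scope.

(* Since x^* lies in no closure of a U_n and the weak-star topology is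
   regular, each U_n can be separated from x^* by a neighbourhood W_n whose
   closure misses it.  Extract n_k increasing with x_{n_k}^* in
   W_0 /\ ... /\ W_k and x_{n_k}^*(x) > 1 - 1/(k+1).  By Banach-Alaoglu the
   subsequence has cluster points in B_{X^*}, and it converges to x^* as soon
   as x^* is its only one.  A cluster point g lies in the closure of every
   W_n and has g(x) = 1, so g is in J(x) but in no U_n: hence g = x^*. *)

Lemma cluster_closed {T : topologicalType} {F : set_system T} {S : set T}
    {g : T} :
  closed S -> F S -> cluster F g -> S g.
Proof.
by move=> cS FS; rewrite clusterE (closure_id S).1 // => /(_ S FS).
Qed.

Lemma compact_cluster_cvg {T : topologicalType} {K : set T} {F : set_system T}
    {a : T} :
  ProperFilter F -> compact K -> F K ->
  (forall g, K g -> cluster F g -> g = a) -> F --> a.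
Proof.
move=> PF cK FK cluster_a O aO; apply: contrapT => nFO.
pose G := within (~` O°) F.
have PG : ProperFilter G.
  apply: Build_ProperFilter => G0; apply: nFO.
  have {}G0 : F [set z | ~ O° z -> False] := G0.
  rewrite nbhs_simpl; apply: filterS G0 => z nnOz.
  by apply: interior_subset; apply: contrapT.
have [g [Kg Gg]] := cK G PG (filterS (fun _ Kz _ => Kz) FK).
have gO : (~` O°) g.
  apply: cluster_closed Gg; last exact: withinT.
  exact/open_closedC/open_interior.
apply: gO; rewrite (cluster_a g Kg) ?nbhs_singleton ?nbhs_interior //.
exact: cvg_cluster (cvg_within _) _ Gg.
Qed.

Lemma nbhs_closure_disjoint {T : uniformType} {a : T} {C : set T} :
  closed C -> ~ C a -> exists W, nbhs a W /\ closure W `<=` ~` C.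
Proof.
move=> cC Ca; have [W ? ?] : filter_from (nbhs a) closure (~` C).
  apply: uniform_regular; apply: open_nbhs_nbhs.
  by split=> //; exact: closed_openC.
by exists W.
Qed.

Lemma cluster_subseq {T : topologicalType} {u : nat -> T} {a : T}
    {V : nat -> set T} :
  (forall A, nbhs a A -> forall N, exists2 n, (N <= n)%N & A (u n)) ->
  (forall k, nbhs a (V k)) ->
  exists nk : nat -> nat,
    (forall k, (nk k < nk k.+1)%N) /\ forall k, V k (u (nk k)).
Proof.
move=> u_clusters Va.
have /choice[next next_spec] :
    forall kN : nat * nat, exists n, (kN.2 <= n)%N /\ V kN.1 (u n).
  by move=> [k N]; have [n] := u_clusters _ (Va k) N; exists n.
pose fix nk k :=
  if k is k'.+1 then next (k, (nk k').+1) else next (0%N, 0%N).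
exists nk; split=> [k|[|k]] /=.
- by have [] := next_spec (k.+1, (nk k).+1).
- by have [] := next_spec (0%N, 0%N).
- by have [] := next_spec (k.+1, (nk k).+1).
Qed.

Lemma cluster_subseq_eventually {T : topologicalType} {u : nat -> T} {a : T}
    {Y : nat -> set T} :
  (forall A, nbhs a A -> forall N, exists2 n, (N <= n)%N & A (u n)) ->
  (forall i, nbhs a (Y i)) ->
  exists nk : nat -> nat, (forall k, (nk k < nk k.+1)%N) /\
    forall i, \forall k \near \oo, Y i (u (nk k)).
Proof.
move=> u_clusters Ya.
have prefix_nbhs k : nbhs a [set z | forall i : 'I_k.+1, Y i z].
  apply: (@filter_forall _ _ (fun i : 'I_k.+1 => Y i) (nbhs a)) => i.
  exact: Ya.
have [nk [nk_incr nk_Y]] := cluster_subseq u_clusters prefix_nbhs.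
exists nk; split=> // i; apply: filterS (nbhs_infty_ge i) => k ik.
exact: (nk_Y k (Ordinal (ik : i < k.+1)%N)).
Qed.

Section LinearContractions.
Context {R : realType} {X : normedModType R}.

Definition lin_functional (f : X -> R) :=
  forall (a : R) (u v : X), f (a *: u + v) = a * f u + f v.

Section LinFunctional.
Variables (f : X -> R) (f_lin : lin_functional f).

Lemma lin_functional0 : f 0 = 0.
Proof.
have := f_lin 1 0 0; rewrite scaler0 addr0 mul1r => f00.
by apply: (@addrI _ (f 0)); rewrite addr0 -f00.
Qed.

Lemma lin_functionalZ a u : f (a *: u) = a * f u.
Proof. by rewrite -[a *: u]addr0 f_lin lin_functional0 addr0. Qed.

Lemma lin_functionalB u v : f (u - v) = f u - f v.
Proof.
have -> : u - v = (-1) *: v + u by rewrite scaleN1r addrC.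
by rewrite f_lin mulN1r addrC.
Qed.

End LinFunctional.

Lemma dualnorm_ub {f : X -> R} {M : R} :
  (forall u, `|u| <= 1 -> `|f u| <= M) ->
  forall u, `|u| <= 1 -> `|f u| <= dualnorm f.
Proof.
move=> fM u u1; apply: sup_upper_bound; last by exists u.
split; first by exists `|f u|, u.
by exists M => _ [v /fM + <-].
Qed.

Lemma dualnorm_le {f : X -> R} {M : R} :
  (forall u, `|u| <= 1 -> `|f u| <= M) -> dualnorm f <= M.
Proof.
move=> fM; apply: ge_sup; first by exists `|f 0|, 0 => //=; rewrite normr0.
by move=> _ [u /fM + <-].
Qed.

Lemma dual_bounded {f : {ptws X -> R^o}} : dual f ->
  exists M : R, forall u, `|u| <= 1 -> `|f u| <= M.
Proof.
move=> [f_lin f_cont].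
have : \forall y \near (0 : X), `|f 0 - f y| < 1.
  by have /cvgrPdist_lt := f_cont 0; apply; exact: ltr01.
rewrite lin_functional0 // => /nbhs_ballP[d /= d0 f_small].
exists (2 / d) => u u1.
have d2_gt0 : 0 < d / 2 by rewrite divr_gt0.
have : ball (0 : X) d ((d / 2) *: u).
  rewrite -ball_normE /= sub0r normrN normrZ gtr0_norm //.
  rewrite (@le_lt_trans _ _ (d / 2)) ?ltr_pdivrMr ?ltr_pMr ?ltr1n //.
  by rewrite -[leRHS]mulr1 ler_pM2l.
move/f_small; rewrite /= sub0r normrN lin_functionalZ // normrM gtr0_norm //.
by rewrite -ltr_pdivlMl // invf_div mulr1 => /ltW.
Qed.

Lemma dual_ball_le_norm (f : {ptws X -> R^o}) : dual_ball f ->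
  forall u, `|f u| <= `|u|.
Proof.
move=> [f_dual f_le1] u; have [f_lin _] := f_dual.
have [->|u0] := eqVneq u 0; first by rewrite lin_functional0 // !normr0.
have nu_gt0 : 0 < `|u| by rewrite normr_gt0.
have [M fM] := dual_bounded f_dual.
have : `|f (`|u|^-1 *: u)| <= 1.
  apply: le_trans f_le1; apply: (dualnorm_ub fM).
  by rewrite normrZ normfV normr_id mulVf // gt_eqF.
by rewrite lin_functionalZ // normrM normfV normr_id ler_pdivrMl // mulr1.
Qed.

(* B_{X^*} without the continuity requirement, which bounded linearity
   implies anyway; in this form it is a closed subset of a Tychonoff product
   of compact intervals. *)
Definition lin_contractions : set {ptws X -> R^o} :=
  [set f | lin_functional f /\ forall u, `|f u| <= `|u|].

Lemma dual_ball_lin_contractions : @dual_ball R X `<=` lin_contractions.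
Proof.
by move=> f f_ball; split; [case: f_ball => -[] | exact: dual_ball_le_norm].
Qed.

Lemma eval_continuous (u : X) : continuous (fun f : {ptws X -> R^o} => f u).
Proof. exact: proj_continuous. Qed.

Lemma closed_eval_ge (u : X) (c : R) :
  closed [set f : {ptws X -> R^o} | c <= f u].
Proof.
exact: (continuous_closedP _).1 (eval_continuous u) _ (@closed_ge R^o _).
Qed.

Lemma cluster_eval_ge1 {F : set_system {ptws X -> R^o}} {FF : Filter F}
    {u : X} {g : {ptws X -> R^o}} :
  cluster F g -> (forall i, \forall f \near F, 1 - i.+1%:R^-1 < f u) ->
  1 <= g u.
Proof.
move=> g_cluster F_gt; apply/ler_addgt0Pr => e e_gt0.
have [i _ /(_ i (leqnn i)) /= i_e] := near_infty_natSinv_lt (PosNum e_gt0).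
rewrite -lerBlDr (le_trans (lerB (lexx 1) (ltW i_e))) //.
apply: (cluster_closed (closed_eval_ge u _) _ g_cluster).
by apply: filterS (F_gt i) => f /ltW.
Qed.

Lemma closed_lin_contractions : closed lin_contractions.
Proof.
have closure_sub (S : set {ptws X -> R^o}) :
    closed S -> lin_contractions `<=` S -> closure lin_contractions `<=` S.
  by move=> cS KS; rewrite (closure_id S).1 //; exact: closureS.
move=> g Kg; split=> [a u v|u].
- pose defect (f : {ptws X -> R^o}) : R^o :=
    f (a *: u + v) - (a * f u + f v).
  have defect_cont : continuous defect.
    move=> f; apply: (@cvgB R R^o _ (nbhs f) _ _ _ _ _ (eval_continuous _ f)).
    apply: (@cvgD R R^o _ (nbhs f) _ _ _ _ _ _ (eval_continuous _ f)).
    exact: (@cvgMr R^o _ (nbhs f) _ _ a _ (eval_continuous _ f)).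
  have : defect g = 0.
    apply: (closure_sub (defect @^-1` [set 0]) _ _ g Kg).
      exact: (continuous_closedP _).1 defect_cont _ (@closed_eq R^o 0).
    by move=> f [f_lin _]; rewrite /defect /= f_lin subrr.
  by move/eqP; rewrite subr_eq0 => /eqP.
- pose norm_at (f : {ptws X -> R^o}) : R := `|f u|.
  have norm_at_cont : continuous norm_at.
    move=> f.
    exact: (@cvg_norm R R^o _ (nbhs f) _ _ _ (eval_continuous u f)).
  apply: (closure_sub (norm_at @^-1` [set t | t <= `|u|]) _ _ g Kg).
    exact: (continuous_closedP _).1 norm_at_cont _ (@closed_le R _).
  by move=> f [_]; apply.
Qed.

Lemma compact_lin_contractions : compact lin_contractions.
Proof.
have : compact [set f : {ptws X -> R^o} |
                forall u, `[- `|u|, `|u|]%classic (f u)].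
  exact: (@tychonoff X (fun _ => R^o) _ (fun u => @segment_compact R _ _)).
move=> /(subclosed_compact closed_lin_contractions); apply=> f [_ f_le] u /=.
by rewrite in_itv /= -ler_norml.
Qed.

Lemma lin_contractions_Jset (x : X) (f : {ptws X -> R^o}) :
  `|x| = 1 -> lin_contractions f -> f x = 1 -> Jset x f.
Proof.
move=> x1 [f_lin f_le] fx1; split=> //; split; first split=> // p.
  apply/cvgrPdist_lt => e e_gt0; apply/nbhs_ballP; exists e => //= y.
  by rewrite -ball_normE /= -lin_functionalB //; exact: le_lt_trans.
have f_le1 u : `|u| <= 1 -> `|f u| <= 1 by move=> u1; exact: le_trans u1.
apply/eqP; rewrite eq_le dualnorm_le //=.
by have := dualnorm_ub f_le1 x; rewrite x1 fx1 normr1; apply.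
Qed.

End LinearContractions.

Theorem proposition2p2 (R : realType) (X : completeNormedModType R)
  (x : X) (xstar : {ptws X -> R^o}) (xs : nat -> {ptws X -> R^o})
  (U : nat -> set {ptws X -> R^o}) :
  `|x| = 1 ->
  @dual_sphere R X xstar ->
  xstar x = 1 ->
  (forall n, @dual_ball R X (xs n)) ->
  (forall V : set {ptws X -> R^o}, nbhs xstar V ->
     forall N : nat, exists2 n : nat, (N <= n)%N & V (xs n)) ->
  (forall n, U n `<=` Jset x /\ rel_wstar_open (Jset x) (U n)) ->
  \bigcup_n U n = Jset x `\ xstar ->
  \bigcup_n closure (U n) = Jset x `\ xstar ->
  exists nk : nat -> nat, (forall k, (nk k < nk k.+1)%N) /\
    (xs \o nk) @ \oo --> xstar.
Proof.
move=> x1 _ xstar_x xs_ball xstar_cluster _ Ucup Ucl.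
have xstar_notin_closure n : ~ closure (U n) xstar.
  move=> Un_xstar; have : (\bigcup_n closure (U n)) xstar by exists n.
  by rewrite Ucl => -[_]; apply.
have /choice[W W_spec] n := nbhs_closure_disjoint (@closed_closure _ (U n))
  (xstar_notin_closure n).
pose Y i := W i `&` [set f : {ptws X -> R^o} | 1 - i.+1%:R^-1 < f x].
have Y_nbhs i : nbhs xstar (Y i).
  apply: filterI; first exact: (W_spec i).1.
  apply: (eval_continuous x xstar _ (lt_nbhsr _)).
  by rewrite xstar_x ltrBlDr ltrDl invr_gt0.
have [nk [nk_incr nk_Y]] := cluster_subseq_eventually xstar_cluster Y_nbhs.
exists nk; split=> //.
apply: (@compact_cluster_cvg _ _ ((xs \o nk) @ \oo) _ _
  (@compact_lin_contractions R X)).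
  apply: (@nearW _ \oo) => k.
  exact: dual_ball_lin_contractions (xs_ball (nk k)).
move=> g g_contr g_cluster.
have g_W i : closure (W i) g.
  apply: cluster_closed g_cluster; first exact: closed_closure.
  by apply: filterS (nk_Y i) => k [/subset_closure].
have g_x : g x = 1.
  have g_x_le1 : g x <= 1 by rewrite -x1 (le_trans (ler_norm _) (g_contr.2 x)).
  apply/eqP; rewrite eq_le g_x_le1 (cluster_eval_ge1 g_cluster) // => i.
  by apply: filterS (nk_Y i) => k [].
apply: contrapT => g_neq.
have : (\bigcup_n U n) g.
  by rewrite Ucup; split=> //; exact: lin_contractions_Jset.
by case=> n _ /subset_closure Un_g; exact: (W_spec n).2 _ (g_W n) Un_g.
Qed.
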